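(* Let $I\subset\mathbb{N}$ be finite, let $G_1,G_2$ be groups, and for each $i\in I$ let $K_{1_i}\le G_1$ and $K_{2_i}\le G_2$. If $(G_1,(K_{1_i})_{i\in I})$ and $(G_2,(K_{2_i})_{i\in I})$ are subgroup geometry systems, then so is $(G_1\times G_2,(K_{1_i}\times K_{2_i})_{i\in I})$.
   Context: For a group $G$ with subgroups $(K_{\{i\}})_{i\in I}$, put $K_\tau=\bigcap_{i\in\tau}K_{\{i\}}$ for $\emptyset\ne\tau\subseteq I$ and $K_\emptyset=G$. $(G,(K_{\{i\}})_{i\in I})$ is a subgroup geometry system if: (A1) for all $\tau,\tau'\subseteq I$, $K_{\tau\cap\tau'}=\langle K_\tau,K_{\tau'}\rangle$; (A2) for every $\tau\subsetneq I$ and $i\in I\setminus\tau$, $K_\tau K_{\{i\}}=\bigcap_{j\in\tau}K_{\{j\}}K_{\{i\}}$; (A3) for every $i\in I$, $K_I\ne K_{I\setminus\{i\}}$. *)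

From Stdlib Require Import List.

Record Group := {
  carrier :> Type;
  gmul : carrier -> carrier -> carrier;
  gone : carrier;
  ginv : carrier -> carrier;
  gmul_assoc : forall x y z, gmul x (gmul y z) = gmul (gmul x y) z;
  gmul_1l : forall x, gmul gone x = x;
  gmul_1r : forall x, gmul x gone = x;
  gmul_Vl : forall x, gmul (ginv x) x = gone;
  gmul_Vr : forall x, gmul x (ginv x) = gone
}.

Definition subset_of (G : Group) := G -> Prop.

Definition seteq {T : Type} (A B : T -> Prop) : Prop := forall x, A x <-> B x.

Definition is_subgroup (G : Group) (H : subset_of G) : Prop :=
  H (gone G) /\
  (forall x y, H x -> H y -> H (gmul G x y)) /\
  (forall x, H x -> H (ginv G x)).

Definition gen2 (G : Group) (A B : subset_of G) : subset_of G :=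
  fun x => forall H : subset_of G, is_subgroup G H ->
    (forall y, A y -> H y) -> (forall y, B y -> H y) -> H x.

Definition setmul (G : Group) (A B : subset_of G) : subset_of G :=
  fun x => exists a b, A a /\ B b /\ x = gmul G a b.

(* K_tau = intersection of K_{i}, i in tau; K_emptyset = G. *)
Definition Ktau (G : Group) (K : nat -> subset_of G) (tau : nat -> Prop) : subset_of G :=
  fun x => forall j, tau j -> K j x.

Definition subpred (A B : nat -> Prop) : Prop := forall i, A i -> B i.

Definition subgroup_geometry_system (G : Group) (I : nat -> Prop)
    (K : nat -> subset_of G) : Prop :=
  (forall tau tau' : nat -> Prop, subpred tau I -> subpred tau' I ->
     seteq (Ktau G K (fun j => tau j /\ tau' j))
           (gen2 G (Ktau G K tau) (Ktau G K tau'))) /\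
  (forall (tau : nat -> Prop) (i : nat), subpred tau I ->
     (exists k, I k /\ ~ tau k) -> I i -> ~ tau i ->
     seteq (setmul G (Ktau G K tau) (K i))
           (fun x => forall j, tau j -> setmul G (K j) (K i) x)) /\
  (forall i, I i -> ~ seteq (Ktau G K I) (Ktau G K (fun j => I j /\ j <> i))).

Definition prod_group (G1 G2 : Group) : Group.
Proof.
  refine {| carrier := (G1 * G2)%type;
            gmul := fun p q => (gmul G1 (fst p) (fst q), gmul G2 (snd p) (snd q));
            gone := (gone G1, gone G2);
            ginv := fun p => (ginv G1 (fst p), ginv G2 (snd p)) |}.
  - intros [] [] []; simpl; rewrite !gmul_assoc; reflexivity.
  - intros []; simpl; rewrite !gmul_1l; reflexivity.
  - intros []; simpl; rewrite !gmul_1r; reflexivity.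
  - intros []; simpl; rewrite !gmul_Vl; reflexivity.
  - intros []; simpl; rewrite !gmul_Vr; reflexivity.
Defined.

Definition setprod (G1 G2 : Group) (A : subset_of G1) (B : subset_of G2)
  : subset_of (prod_group G1 G2) :=
  fun p => A (fst p) /\ B (snd p).

Definition finite_nat_set (I : nat -> Prop) : Prop :=
  exists s : list nat, forall i, I i -> In i s.


(* Intersections, products of subsets and subgroup generation all act
   componentwise on G1 x G2: for generation this uses that both generating
   sets contain 1, so that <A1 x A2, B1 x B2> contains <A1, B1> x 1 and
   1 x <A2, B2>.  Hence (A1) and (A2) for the product follow from (A1) and (A2)
   for the factors, while (A3) already follows from (A3) for G1, because the
   second components of K_I and K_{I \ {i}} both contain 1. *)

Lemma seteq_sym {T : Type} (A B : T -> Prop) : seteq A B -> seteq B A.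
Proof. intros AB x; symmetry; apply AB. Qed.

Lemma seteq_trans {T : Type} (A B C : T -> Prop) :
  seteq A B -> seteq B C -> seteq A C.
Proof. intros AB BC x; rewrite (AB x); apply BC. Qed.

Lemma Ktau_seteq (G : Group) (K K' : nat -> subset_of G) (tau : nat -> Prop) :
  (forall j, tau j -> seteq (K j) (K' j)) -> seteq (Ktau G K tau) (Ktau G K' tau).
Proof.
  intros KK' x; split; intros Hx j Hj; apply (KK' j Hj); auto.
Qed.

Lemma setmul_seteq (G : Group) (A A' B B' : subset_of G) :
  seteq A A' -> seteq B B' -> seteq (setmul G A B) (setmul G A' B').
Proof.
  intros AA' BB' x; split; intros (a & b & Ha & Hb & ->); exists a, b;
    rewrite (AA' a), (BB' b) in *; auto.
Qed.

Lemma gen2_seteq (G : Group) (A A' B B' : subset_of G) :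
  seteq A A' -> seteq B B' -> seteq (gen2 G A B) (gen2 G A' B').
Proof.
  intros AA' BB' x; split; intros Hx H HH HA HB; apply Hx; auto;
    intros y Hy; [apply HA | apply HB | apply HA | apply HB];
    apply AA' || apply BB'; exact Hy.
Qed.

Lemma ginv_one (G : Group) : ginv G (gone G) = gone G.
Proof. rewrite <- (gmul_1l G (ginv G (gone G))); apply gmul_Vr. Qed.

Lemma is_subgroup_Ktau (G : Group) (I : nat -> Prop) (K : nat -> subset_of G)
    (tau : nat -> Prop) :
  (forall i, I i -> is_subgroup G (K i)) -> subpred tau I ->
  is_subgroup G (Ktau G K tau).
Proof.
  intros HK Ht; repeat split.
  - intros j Hj; apply (HK j (Ht j Hj)).
  - intros x y Hx Hy j Hj; apply (HK j (Ht j Hj)); auto.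
  - intros x Hx j Hj; apply (HK j (Ht j Hj)); auto.
Qed.

Lemma Ktau_one (G : Group) (I : nat -> Prop) (K : nat -> subset_of G)
    (tau : nat -> Prop) :
  (forall i, I i -> is_subgroup G (K i)) -> subpred tau I -> Ktau G K tau (gone G).
Proof. intros HK Ht; apply (is_subgroup_Ktau G I K tau HK Ht). Qed.

Section ProductGroup.

Variables G1 G2 : Group.

Notation G := (prod_group G1 G2).

Lemma setprod_seteq (A1 B1 : subset_of G1) (A2 B2 : subset_of G2) :
  seteq A1 B1 -> seteq A2 B2 -> seteq (setprod G1 G2 A1 A2) (setprod G1 G2 B1 B2).
Proof.
  intros E1 E2 [x y]; unfold setprod; simpl; rewrite (E1 x), (E2 y); reflexivity.
Qed.

Lemma seteq_setprod_fst (A1 B1 : subset_of G1) (A2 B2 : subset_of G2) (y : G2) :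
  A2 y -> B2 y -> seteq (setprod G1 G2 A1 A2) (setprod G1 G2 B1 B2) -> seteq A1 B1.
Proof.
  intros Ay By E x; split; intros Hx; apply (E (x, y)); split; auto.
Qed.

Lemma Ktau_setprod (K1 : nat -> subset_of G1) (K2 : nat -> subset_of G2)
    (tau : nat -> Prop) :
  seteq (Ktau G (fun j => setprod G1 G2 (K1 j) (K2 j)) tau)
        (setprod G1 G2 (Ktau G1 K1 tau) (Ktau G2 K2 tau)).
Proof.
  intros p; split.
  - intros Hp; split; intros j Hj; apply (Hp j Hj).
  - intros [H1 H2] j Hj; split; auto.
Qed.

Lemma setmul_setprod (A1 B1 : subset_of G1) (A2 B2 : subset_of G2) :
  seteq (setmul G (setprod G1 G2 A1 A2) (setprod G1 G2 B1 B2))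
        (setprod G1 G2 (setmul G1 A1 B1) (setmul G2 A2 B2)).
Proof.
  intros p; split.
  - intros ([a1 a2] & [b1 b2] & [Ha1 Ha2] & [Hb1 Hb2] & ->).
    split; simpl; [exists a1, b1 | exists a2, b2]; auto.
  - destruct p as [x y]; intros [Hx Hy]; simpl in Hx, Hy.
    destruct Hx as (a1 & b1 & Ha1 & Hb1 & ->), Hy as (a2 & b2 & Ha2 & Hb2 & ->).
    exists (a1, a2), (b1, b2); repeat split; auto.
Qed.

Lemma is_subgroup_preimage_fst (H1 : subset_of G1) :
  is_subgroup G1 H1 -> is_subgroup G (fun p => H1 (fst p)).
Proof. intros (H1one & H1mul & H1inv); repeat split; simpl; auto. Qed.

Lemma is_subgroup_preimage_snd (H2 : subset_of G2) :
  is_subgroup G2 H2 -> is_subgroup G (fun p => H2 (snd p)).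
Proof. intros (H2one & H2mul & H2inv); repeat split; simpl; auto. Qed.

Lemma is_subgroup_slice_fst (H : subset_of G) :
  is_subgroup G H -> is_subgroup G1 (fun x => H (x, gone G2)).
Proof.
  intros (Hone & Hmul & Hinv); repeat split.
  - exact Hone.
  - intros x x' Hx Hx'; generalize (Hmul _ _ Hx Hx'); simpl; rewrite gmul_1l; auto.
  - intros x Hx; generalize (Hinv _ Hx); simpl; rewrite ginv_one; auto.
Qed.

Lemma is_subgroup_slice_snd (H : subset_of G) :
  is_subgroup G H -> is_subgroup G2 (fun y => H (gone G1, y)).
Proof.
  intros (Hone & Hmul & Hinv); repeat split.
  - exact Hone.
  - intros y y' Hy Hy'; generalize (Hmul _ _ Hy Hy'); simpl; rewrite gmul_1l; auto.
  - intros y Hy; generalize (Hinv _ Hy); simpl; rewrite ginv_one; auto.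
Qed.

Lemma gen2_setprod (A1 B1 : subset_of G1) (A2 B2 : subset_of G2) :
  A1 (gone G1) -> B1 (gone G1) -> A2 (gone G2) -> B2 (gone G2) ->
  seteq (gen2 G (setprod G1 G2 A1 A2) (setprod G1 G2 B1 B2))
        (setprod G1 G2 (gen2 G1 A1 B1) (gen2 G2 A2 B2)).
Proof.
  intros A1one B1one A2one B2one [x y]; split.
  - intros Hxy; split.
    + intros H1 H1sub HA HB.
      apply (Hxy (fun p => H1 (fst p))); [apply is_subgroup_preimage_fst; auto | |];
        intros p [Hp _]; auto.
    + intros H2 H2sub HA HB.
      apply (Hxy (fun p => H2 (snd p))); [apply is_subgroup_preimage_snd; auto | |];
        intros p [_ Hp]; auto.
  - intros [Hx Hy] H Hsub HA HB.
    assert (Hx1 : H (x, gone G2)).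
    { apply (Hx (fun u => H (u, gone G2))); [apply is_subgroup_slice_fst; auto | |];
        intros u Hu; [apply HA | apply HB]; split; auto. }
    assert (H1y : H (gone G1, y)).
    { apply (Hy (fun v => H (gone G1, v))); [apply is_subgroup_slice_snd; auto | |];
        intros v Hv; [apply HA | apply HB]; split; auto. }
    destruct Hsub as (_ & Hmul & _).
    generalize (Hmul _ _ Hx1 H1y); simpl; rewrite gmul_1r, gmul_1l; auto.
Qed.

End ProductGroup.

Theorem mainTheorem12 (I : nat -> Prop) (G1 G2 : Group)
    (K1 : nat -> subset_of G1) (K2 : nat -> subset_of G2) :
  finite_nat_set I ->
  (forall i, I i -> is_subgroup G1 (K1 i)) ->
  (forall i, I i -> is_subgroup G2 (K2 i)) ->
  subgroup_geometry_system G1 I K1 ->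
  subgroup_geometry_system G2 I K2 ->
  subgroup_geometry_system (prod_group G1 G2) I
    (fun i => setprod G1 G2 (K1 i) (K2 i)).
Proof.
  intros _ HK1 HK2 (A1 & A2 & A3) (B1 & B2 & _); split; [| split].
  - intros tau tau' Ht Ht'.
    eapply seteq_trans; [apply Ktau_setprod |].
    eapply seteq_trans; [apply setprod_seteq; [apply A1 | apply B1]; assumption |].
    eapply seteq_trans;
      [apply seteq_sym, gen2_setprod; eapply Ktau_one; eassumption |].
    apply gen2_seteq; apply seteq_sym, Ktau_setprod.
  - intros tau i Ht Hk Hi Hni.
    eapply seteq_trans; [apply setmul_seteq; [apply Ktau_setprod | intro; reflexivity] |].
    eapply seteq_trans; [apply setmul_setprod |].
    eapply seteq_trans; [apply setprod_seteq; [apply A2 | apply B2]; assumption |].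
    eapply seteq_trans; [apply seteq_sym, Ktau_setprod |].
    apply Ktau_seteq; intros j _; apply seteq_sym, setmul_setprod.
  - intros i Hi E; apply (A3 i Hi).
    apply (seteq_setprod_fst G1 G2 _ _
             (Ktau G2 K2 I) (Ktau G2 K2 (fun j => I j /\ j <> i)) (gone G2)).
    + apply (Ktau_one G2 I); auto; intros j; auto.
    + apply (Ktau_one G2 I); auto; intros j []; auto.
    + eapply seteq_trans; [apply seteq_sym, Ktau_setprod |].
      eapply seteq_trans; [exact E | apply Ktau_setprod].
Qed.
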